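(* Let $n\geq 2$ and let $C$ be an all-ones CRC in $G_n$ with covering radius $\rho\geq 2$, $c_1=1$, $c_2=3$, $\mathbf{0}\in C$ and $-e_n\in C$. Then: (1) the intersection of any cap with the $0$-slice contains at most one word of $C$; in particular $C$ contains at most $2(n-1)$ words of type $3100$ lying in the $0$-slice; (2) every word $x$ of type $1100$ with $x_n=0$ lies in $C_2$ and is at distance two from exactly one word $y\in C$ of type $3100$ with $y_n=0$.
   Context: $G_n$: vertex set $\mathbb{Z}^n$, $x\sim y$ iff $\sum_i|x_i-y_i|=1$; $e_i$ the $i$-th unit vector. For a code $C$ with covering radius $\rho$, $C_i=\{v:d(v,C)=i\}$; $C$ is a CRC if for all $i,j$ every vertex of $C_i$ has the same number $\alpha_{ij}$ of neighbours in $C_j$, with $\alpha_{ij}=0$ for $|i-j|>1$; $a_i=\alpha_{ii}$, $c_i=\alpha_{i,i-1}$. $C$ is all-ones if $a_i=1$ for all $i$. The type of a word of weight at most four is the nonincreasing sequence of its four largest absolute entry values; type $1100$: exactly two entries $\pm1$, others $0$; type $3100$: one entry $\pm3$, one entry $\pm1$, others $0$. A cap is one of the sets $\{\varepsilon 3e_i\pm e_j: j\neq i\}$, $i\in\{1,\ldots,n\}$, $\varepsilon\in\{\pm1\}$. The $0$-slice is $\{x: x_n\in\{0,-1\}\}$. *)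

From mathcomp Require Import all_boot all_order all_algebra.
Set Implicit Arguments. Unset Strict Implicit. Unset Printing Implicit Defensive.
Import Order.TTheory GRing.Theory Num.Theory.
Local Open Scope ring_scope.

(* Vertices of G_n : Z^n, coordinates indexed by 'I_n (coordinate x_n is the
   one of index n.-1). *)
Definition vert (n : nat) := {ffun 'I_n -> int}.

Definition l1 {n : nat} (x y : vert n) : nat := (\sum_(i < n) absz (x i - y i))%N.

Definition adj {n : nat} (x y : vert n) : Prop := l1 x y = 1%N.

Definition code (n : nat) := vert n -> Prop.

Definition distC {n : nat} (C : code n) (v : vert n) (k : nat) : Prop :=
  (exists c, C c /\ l1 v c = k) /\ (forall c, C c -> (k <= l1 v c)%N).

Definition covrad {n : nat} (C : code n) (rho : nat) : Prop :=
  (forall v, exists k, (k <= rho)%N /\ distC C v k) /\ (exists v, distC C v rho).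

Definition nbcount {n : nat} (C : code n) (v : vert n) (j m : nat) : Prop :=
  exists s : seq (vert n), uniq s /\ size s = m /\
    forall u, u \in s <-> (adj v u /\ distC C u j).

Definition CRC {n : nat} (C : code n) (rho : nat) (alpha : nat -> nat -> nat) : Prop :=
  covrad C rho /\
  (forall i j v, (i <= rho)%N -> (j <= rho)%N -> distC C v i -> nbcount C v j (alpha i j)) /\
  (forall i j, (i <= rho)%N -> (j <= rho)%N -> (i.+1 < j)%N \/ (j.+1 < i)%N -> alpha i j = 0%N).

(* all-ones: a_i = alpha i i = 1 for all i *)
Definition all_ones (rho : nat) (alpha : nat -> nat -> nat) : Prop :=
  forall i, (i <= rho)%N -> alpha i i = 1%N.

Definition zerov (n : nat) : vert n := [ffun => 0].
Definition minus_en (n : nat) : vert n := [ffun k : 'I_n => if val k == n.-1 then -1 else 0].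

Definition type1100 {n : nat} (x : vert n) : Prop :=
  exists i j : 'I_n, i != j /\ `|x i| = 1 /\ `|x j| = 1 /\
    forall k, k != i -> k != j -> x k = 0.

Definition type3100 {n : nat} (x : vert n) : Prop :=
  exists i j : 'I_n, i != j /\ `|x i| = 3 /\ `|x j| = 1 /\
    forall k, k != i -> k != j -> x k = 0.

Definition cap {n : nat} (i : 'I_n) (eps : int) (x : vert n) : Prop :=
  exists j : 'I_n, j != i /\ exists s : int, (s = 1 \/ s = -1) /\
    forall k, x k = (if k == i then 3 * eps else if k == j then s else 0).

Definition slice0 {n : nat} (x : vert n) : Prop :=
  forall k : 'I_n, val k = n.-1 -> x k = 0 \/ x k = -1.

Definition lastzero {n : nat} (x : vert n) : Prop :=
  forall k : 'I_n, val k = n.-1 -> x k = 0.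

From mathcomp Require Import all_boot all_order all_algebra zify.
From Stdlib Require Import Classical.
Import Order.TTheory GRing.Theory Num.Theory.
Local Open Scope ring_scope.
Set Implicit Arguments. Unset Strict Implicit. Unset Printing Implicit Defensive.

(* Since a_0 = c_1 = 1, a vertex in C or in C_1 has exactly one neighbour in C.
   (1) Every word of a cap is adjacent to its centre 3 eps e_i, so a cap meets C
   at most once; a 3100 word of the 0-slice has its entry 3 outside coordinate n,
   which leaves 2(n-1) caps.
   (2) As -e_n is the only C-neighbour of 0, the vectors +-e_i and +-e_i - e_n
   (i <> n) lie in C_1, and since a_1 = c_1 = 1 all their other neighbours are at
   distance >= 2 from C.  Hence x = s e_i + t e_j lies in C_2 with C_1-neighbours
   s e_i and t e_j; as c_2 = 3 it has exactly one more, z, and all its remaining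
   neighbours are at distance >= 2.  Chasing the C-neighbour of z through these
   constraints forces z = x + s e_i (or x + t e_j), whose C-neighbour is the 3100
   word x + 2 s e_i.  Any other nonzero word of C at distance 2 from x is adjacent
   to a C_1-neighbour of x, and the only possible one is z. *)

Definition ev {n} (q : 'I_n) (d : int) : vert n := [ffun k => if k == q then d else 0].

(* [ffunE] leaves the [int] operations in the form given by the generic Z-module
   instance on [{ffun _ -> int}], which [lia] does not recognise. *)
Lemma vertD n (x y : vert n) k : (x + y) k = x k + y k.
Proof. by rewrite ffunE. Qed.

Lemma vert0 n (k : 'I_n) : (0 : vert n) k = 0.
Proof. by rewrite ffunE. Qed.

Lemma evE n (q k : 'I_n) d : ev q d k = if k == q then d else 0.
Proof. by rewrite ffunE. Qed.

Section L1Metric.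
Variable n : nat.
Implicit Types (x y : vert n) (q : 'I_n) (d : int).

Lemma l1C x y : l1 x y = l1 y x.
Proof. by apply: eq_bigr => k _; rewrite -abszN opprB. Qed.

Lemma l1xx x : l1 x x = 0%N.
Proof. by rewrite /l1 big1 // => k _; rewrite subrr. Qed.

Lemma l1_eq0 x y : l1 x y = 0%N -> x = y.
Proof.
move=> /eqP; rewrite /l1 sum_nat_eq0 => /forallP x_y.
by apply/ffunP => k; have /= := x_y k; lia.
Qed.

Lemma l1_shift x q d : l1 x (x + ev q d) = absz d.
Proof.
rewrite /l1 (bigD1 q) //= big1 => [|k /negbTE k_q]; rewrite !vertD !evE ?eqxx ?k_q; lia.
Qed.

Lemma l1_ev2_0 (i j : 'I_n) (s t : int) : i != j ->
  l1 (ev i s + ev j t) 0 = (absz s + absz t)%N.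
Proof.
move=> ij; rewrite /l1 (bigD1 i) // (bigD1 j) 1?eq_sym //= big1.
  by rewrite !(vertD, evE, vert0) !eqxx (negbTE ij) eq_sym (negbTE ij); lia.
by move=> k /andP[/negbTE ki /negbTE kj]; rewrite !(vertD, evE, vert0) ki kj.
Qed.

Lemma adj_shift x q d : `|d| = 1 -> adj x (x + ev q d).
Proof. by rewrite /adj l1_shift; lia. Qed.

Lemma adj_shiftE x y q d : `|d| = 1 -> y = x + ev q d -> adj x y.
Proof. by move=> d1 ->; exact: adj_shift. Qed.

Lemma adjC x y : adj x y -> adj y x.
Proof. by rewrite /adj l1C. Qed.

Lemma adjP x y : adj x y -> exists q d, `|d| = 1 /\ y = x + ev q d.
Proof.
rewrite /adj /l1 => xy.
have [q q_diff] : exists q, (0 < absz (x q - y q))%N.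
  apply/existsP; apply: contraT => /existsPn all0.
  by move: xy; rewrite big1 // => k _; have := all0 k; lia.
move: xy; rewrite (bigD1 q) //=; set rest := (\sum_(k | _) _)%N => xy.
have /eqP : rest = 0%N by lia.
rewrite sum_nat_eq0 => /forallP rest0.
exists q, (y q - x q); split; first lia.
apply/ffunP => k; rewrite !(vertD, evE, vert0); case: eqP => [->|/eqP kq]; first by rewrite addrC subrK.
by have := rest0 k; rewrite kq /=; lia.
Qed.

Lemma l1_midpoint x y k : l1 x y = k.+1 -> exists2 r, adj x r & l1 r y = k.
Proof.
move=> xy; have [q xq] : exists q, x q != y q.
  apply/existsP; apply: contraT => /existsPn x_y.
  by move: xy; rewrite /l1 big1 // => i _; have /negPn/eqP-> := x_y i; rewrite subrr.
pose d : int := if x q < y q then 1 else -1.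
exists (x + ev q d); first by apply: adj_shift; rewrite /d; case: ifP.
have d_step : (absz (x q + d - y q)%R).+1 = absz (x q - y q)%R.
  by rewrite /d; case: ifP => ?; move: xq; lia.
move: xy; rewrite /l1 (bigD1 q) // [in X in _ -> X](bigD1 q) //= vertD evE eqxx.
under [in X in _ -> X]eq_bigr => i /negbTE iq do rewrite vertD evE iq addr0.
by rewrite -d_step addSn => -[].
Qed.

End L1Metric.

Ltac coord_cases :=
  repeat (match goal with |- context [?a == ?b] => case: (a =P b) => [?|?] end; try subst);
  try (exfalso; congruence).
Ltac vert_eq := apply/ffunP => ?; rewrite !(vertD, evE, vert0); coord_cases; lia.
Ltac adj_via q d := apply: (@adj_shiftE _ _ _ q d); [lia | vert_eq].
Ltac vert_neq c := move=> /ffunP /(_ c); rewrite !(vertD, evE, vert0); coord_cases; lia.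

Section CodeDistance.
Variables (n : nat) (C : code n).
Implicit Types (u v w c : vert n) (j k m : nat).

Definition distC_ge u k := forall c, C c -> (k <= l1 u c)%N.

Lemma distC0 u : distC C u 0 <-> C u.
Proof.
split=> [[[c [Cc /l1_eq0 ->]]] //|Cu].
by split=> //; exists u; rewrite l1xx.
Qed.

Lemma distC_ge1 u : ~ C u -> distC_ge u 1.
Proof. by move=> Cu c Cc; case: (posnP (l1 u c)) => // /l1_eq0 u_c; rewrite u_c in Cu. Qed.

Lemma distC_ge_notC u k : distC_ge u k.+1 -> ~ C u.
Proof. by move=> far Cu; have := far u Cu; rewrite l1xx. Qed.

Lemma distC_geS u k : distC_ge u k -> ~ distC C u k -> distC_ge u k.+1.
Proof.
move=> far not_k c Cc; rewrite ltn_neqAle far // andbT.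
by apply/eqP => ku; apply: not_k; split=> //; exists c.
Qed.

Lemma distC_ge2_adj u w : distC_ge u 2 -> adj u w -> ~ C w.
Proof. by move=> far uw Cw; have := far w Cw; rewrite uw. Qed.

Lemma distC1_adj u c : ~ C u -> C c -> adj u c -> distC C u 1.
Proof. by move=> Cu Cc uc; split; [exists c | exact: distC_ge1]. Qed.

Lemma nbcount_size v j m s : nbcount C v j m -> uniq s ->
  (forall w, w \in s -> adj v w /\ distC C w j) -> (size s <= m)%N.
Proof.
by case=> s' [s'_uniq [<- s'E]] s_uniq s_nbr; apply: uniq_leq_size => // w /s_nbr /s'E.
Qed.

Lemma nbcount1_uniq v j w w' : nbcount C v j 1 ->
  adj v w -> distC C w j -> adj v w' -> distC C w' j -> w = w'.
Proof.
move=> nb vw Dw vw' Dw'; apply/eqP; apply: contraT => ww'.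
suff : (size [:: w; w'] <= 1)%N by [].
apply: (nbcount_size nb); first by rewrite /= inE ww'.
by move=> u; rewrite !inE => /orP[] /eqP->.
Qed.

Lemma nbcount_exists v j m s : nbcount C v j m -> (size s < m)%N ->
  exists w, [/\ adj v w, distC C w j & w \notin s].
Proof.
case=> s' [s'_uniq [<- s'E]] small.
have /hasP[w /s'E[vw Dw] ws] : has (predC (mem s)) s'.
  apply/hasPn => all_s; suff : (size s' <= size s)%N by rewrite leqNgt small.
  by apply: uniq_leq_size => // w /all_s /negPn.
by exists w.
Qed.

End CodeDistance.

Lemma cover_subsingletons (A T : eqType) (I : seq A) (P : A -> T -> Prop) :
  (forall a x y, P a x -> P a y -> x = y) ->
  exists2 s : seq T, (size s <= size I)%N & forall a x, a \in I -> P a x -> x \in s.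
Proof.
move=> P_uniq; elim: I => [|a I [s s_size s_cover]]; first by exists [::].
have [[x Pax]|noP] := classic (exists x, P a x).
  exists (x :: s) => [|b y]; first by rewrite /= ltnS.
  rewrite !inE => /orP[/eqP-> /(P_uniq _ _ _ Pax)->|bI Pby]; first by rewrite eqxx.
  by rewrite (s_cover b y bI Pby) orbT.
exists s => [|b y]; first exact: leqW.
rewrite inE => /orP[/eqP-> Pay|]; [by case: noP; exists y | exact: s_cover].
Qed.

Lemma type3100_cap n (x : vert n) : type3100 x ->
  exists i eps, [/\ eps \in [:: 1; -1], `|x i| = 3 & cap i eps x].
Proof.
case=> i [j [ij [xi [xj x0]]]]; exists i, (if 0 < x i then 1 else -1); split=> //.
  by case: ifP; rewrite !inE.
exists j; split; first by rewrite eq_sym.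
exists (x j); split; first lia.
move=> k; have [->|ki] := eqVneq k i; first by case: ifP; lia.
by have [->|kj] := eqVneq k j; last exact: x0.
Qed.

Lemma slice0_type3100_cover n (C : code n) :
  (forall i eps x y, C x -> C y -> cap i eps x -> cap i eps y -> x = y) ->
  exists s : seq (vert n), (size s <= 2 * (n - 1))%N /\
    forall x, C x -> type3100 x -> slice0 x -> x \in s.
Proof.
move=> cap_uniq.
pose I := allpairs (@pair nat int) (iota 0 n.-1) [:: 1; -1].
have I_size : size I = (n.-1 * 2)%N by rewrite size_allpairs size_iota.
pose P (ke : nat * int) x := C x /\ exists2 i : 'I_n, i = ke.1 :> nat & cap i ke.2 x.
have [|s s_size s_cover] := @cover_subsingletons (nat * int)%type (vert n) I P.
  move=> [k e] x y [Cx [i /= ik cx]] [Cy [i' /= i'k cy]].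
  have i_i' : i = i' by apply: ord_inj; rewrite ik i'k.
  by rewrite -i_i' in cy; exact: (cap_uniq i e).
exists s; split; first by rewrite (leq_trans s_size) // I_size; lia.
move=> x Cx /type3100_cap[i [eps [eps_pm xi cx]]] x_slice.
apply: (s_cover (nat_of_ord i, eps)); last by split=> //; exists i.
have i_last : (i < n.-1)%N.
  have : nat_of_ord i <> n.-1 by move=> /x_slice[] xi0; rewrite xi0 in xi.
  by have := ltn_ord i; lia.
by apply/allpairsP; exists (nat_of_ord i, eps); rewrite mem_iota.
Qed.

Lemma type1100_ev2 n (x : vert n) : type1100 x ->
  exists i j s t, [/\ i != j, `|s| = 1, `|t| = 1 & x = ev i s + ev j t].
Proof.
case=> i [j [ij [xi [xj x0]]]]; exists i, j, (x i), (x j); split=> //.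
apply/ffunP => k; rewrite !(vertD, evE).
have [->|ki] := eqVneq k i; first by rewrite (negbTE ij) addr0.
have [->|kj] := eqVneq k j; first by rewrite add0r.
by rewrite addr0 x0.
Qed.

Lemma tripled_type3100 n (i j : 'I_n) s t : i != j -> `|s| = 1 -> `|t| = 1 ->
  type3100 (ev i s + ev j t + ev i (2 * s)).
Proof.
move=> /eqP ij s1 t1; exists i, j; split; first exact/eqP.
split; first by rewrite !(vertD, evE); coord_cases; lia.
split; first by rewrite !(vertD, evE); coord_cases; lia.
by move=> k /eqP ki /eqP kj; rewrite !(vertD, evE); coord_cases; lia.
Qed.

Lemma lastzeroP n (N : 'I_n) (x : vert n) : val N = n.-1 -> lastzero x <-> x N = 0.
Proof.
move=> N_last; split=> [|xN k kN]; first exact.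
by have -> : k = N by apply: ord_inj; rewrite kN N_last.
Qed.

Section AllOnesCode.
Variables (n : nat) (C : code n).
Hypothesis a0 : forall v, C v -> nbcount C v 0 1.
Hypothesis c1 : forall v, distC C v 1 -> nbcount C v 0 1.
Implicit Types (v w c : vert n) (i k : 'I_n) (s d : int).

Lemma code_nbr_uniq v w w' : C v -> C w -> C w' -> adj v w -> adj v w' -> w = w'.
Proof. by move=> /a0 nb /distC0 Dw /distC0 Dw' vw vw'; exact: (nbcount1_uniq nb). Qed.

Lemma C1_code_nbr_uniq v w w' :
  distC C v 1 -> C w -> C w' -> adj v w -> adj v w' -> w = w'.
Proof. by move=> /c1 nb /distC0 Dw /distC0 Dw' vw vw'; exact: (nbcount1_uniq nb). Qed.

Lemma cap_code_uniq i eps x y : C x -> C y -> cap i eps x -> cap i eps y -> x = y.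
Proof.
have cap_adj z : cap i eps z -> adj (ev i (3 * eps)) z.
  case=> j [/eqP ji [d [d1 zE]]].
  have -> : z = ev i (3 * eps) + ev j d.
    by apply/ffunP => k; rewrite zE !(vertD, evE); coord_cases; lia.
  by apply: adj_shift; lia.
move=> Cx Cy /cap_adj vx /cap_adj vy.
have [Cv|Cv] := classic (C (ev i (3 * eps))); first exact: (code_nbr_uniq Cv).
exact: (C1_code_nbr_uniq (distC1_adj Cv Cx vx)).
Qed.

Hypothesis a1 : forall v, distC C v 1 -> nbcount C v 1 1.
Hypothesis c2 : forall v, distC C v 2 -> nbcount C v 1 3.

Lemma C1_nbr_far q c q' u : distC C q 1 -> C c -> adj q c -> adj q q' -> distC C q' 1 ->
  adj q u -> u <> c -> u <> q' -> distC_ge C u 2.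
Proof.
move=> Dq Cc qc qq' Dq' qu uc uq'; apply: distC_geS.
  by apply: distC_ge1 => Cu; apply: uc; exact: (C1_code_nbr_uniq Dq).
by move=> Du; apply: uq'; exact: (nbcount1_uniq (a1 Dq)).
Qed.

Lemma C2_no_four_C1_nbrs v w1 w2 w3 w4 : distC C v 2 -> uniq [:: w1; w2; w3; w4] ->
  (forall w, w \in [:: w1; w2; w3; w4] -> adj v w /\ distC C w 1) -> False.
Proof. by move=> /c2 nb four C1_four; have := nbcount_size nb four C1_four. Qed.

Variable N : 'I_n.
Hypothesis C0 : C 0.
Hypothesis CmN : C (ev N (-1)).

Lemma adj0_ev k d : `|d| = 1 -> adj 0 (ev k d).
Proof. by move=> d1; rewrite -[ev k d]add0r; exact: adj_shift. Qed.

Lemma ev_C1 k d : `|d| = 1 -> ev k d <> ev N (-1) -> distC C (ev k d) 1.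
Proof.
move=> d1 kd_mN; apply: (distC1_adj _ C0 (adjC (adj0_ev k d1))) => Ckd.
exact/kd_mN/(code_nbr_uniq C0 Ckd CmN (adj0_ev k d1) (adj0_ev N _)).
Qed.

Lemma ev_notN_C1 k d : k <> N -> `|d| = 1 -> distC C (ev k d) 1.
Proof. by move=> kN d1; apply: ev_C1 => //; vert_neq k. Qed.

Lemma ev_mN_C1 i s : i <> N -> `|s| = 1 -> distC C (ev i s + ev N (-1)) 1.
Proof.
move=> iN s1; have mN_is : adj (ev N (-1)) (ev i s + ev N (-1)) by adj_via i s.
apply: (distC1_adj _ CmN (adjC mN_is)) => Cis.
have mN_0 : adj (ev N (-1)) 0 by adj_via N (1 : int).
by have := code_nbr_uniq CmN Cis C0 mN_is mN_0; vert_neq i.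
Qed.

Lemma ev_nbr_far i s u : i <> N -> `|s| = 1 ->
  adj (ev i s) u -> u <> 0 -> u <> ev i s + ev N (-1) -> distC_ge C u 2.
Proof.
move=> iN s1 is_u u0 umN; apply: (C1_nbr_far (ev_notN_C1 iN s1) C0 _ _ (ev_mN_C1 iN s1)) => //.
  by adj_via i (- s).
exact: adj_shift.
Qed.

Lemma ev2_notC i s k (u : int) : i <> N -> `|s| = 1 -> `|u| = 1 ->
  ev i s + ev k u <> 0 -> ev k u <> ev N (-1) -> ~ C (ev i s + ev k u).
Proof.
move=> iN s1 u1 is_ku kmN; apply: (@distC_ge_notC _ _ _ 1).
by apply: (ev_nbr_far iN s1 (adj_shift _ _ u1) is_ku) => /addrI.
Qed.

Section Weight2.
Variables (i j : 'I_n) (s t : int).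
Hypotheses (ij : i <> j) (iN : i <> N) (jN : j <> N) (s1 : `|s| = 1) (t1 : `|t| = 1).
Local Notation x := (ev i s + ev j t).

Lemma x_adj_evl : adj x (ev i s).
Proof. exact/adjC/adj_shift. Qed.

Lemma x_adj_evr : adj x (ev j t).
Proof. by rewrite addrC; exact/adjC/adj_shift. Qed.

Lemma x_C2 : distC C x 2.
Proof.
split; first by exists 0; split=> //; rewrite l1_ev2_0; [lia | apply/eqP].
by apply: (ev_nbr_far iN s1 (adj_shift _ _ t1)); [vert_neq i | vert_neq N].
Qed.

Lemma x_mN_far : distC_ge C (x + ev N (-1)) 2.
Proof.
have q_mN : adj (ev i s + ev N (-1)) (ev N (-1)) by adj_via i (- s).
have q_i : adj (ev i s + ev N (-1)) (ev i s) by adj_via N (1 : int).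
apply: (C1_nbr_far (ev_mN_C1 iN s1) CmN q_mN q_i (ev_notN_C1 iN s1)).
- by adj_via j t.
- by vert_neq i.
- by vert_neq N.
Qed.

Lemma x_third_C1_nbr : exists z, [/\ adj x z, distC C z 1, z <> ev i s & z <> ev j t].
Proof.
have [z [xz Dz]] := nbcount_exists (s := [:: ev i s; ev j t]) (c2 x_C2) erefl.
by rewrite !inE negb_or => /andP[/eqP zi /eqP zj]; exists z.
Qed.

Section ThirdNeighbour.
Variable z : vert n.
Hypotheses (xz : adj x z) (Dz : distC C z 1) (zi : z <> ev i s) (zj : z <> ev j t).

Lemma x_nbr_far r : adj x r -> r <> ev i s -> r <> ev j t -> r <> z -> distC_ge C r 2.
Proof.
move=> xr ri rj rz; apply: distC_geS; first exact/distC_ge1/(distC_ge2_adj x_C2.2 xr).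
move=> Dr; apply: (C2_no_four_C1_nbrs (w1 := ev i s) (w2 := ev j t) (w3 := z) (w4 := r) x_C2).
  have ij_ev : ev i s <> ev j t by vert_neq i.
  by rewrite /= !inE !negb_or; repeat (apply/andP; split); apply/eqP => // e; congruence.
move=> w; rewrite !inE => /or4P[] /eqP->.
- exact: (conj x_adj_evl (ev_notN_C1 iN s1)).
- exact: (conj x_adj_evr (ev_notN_C1 jN t1)).
- exact: (conj xz Dz).
- exact: (conj xr Dr).
Qed.

Lemma third_not_mN k u : z = x + ev k u -> ev k u <> ev N (-1).
Proof.
move=> zE kmN; have [[c [Cc zc]] _] := Dz.
by have := x_mN_far Cc; rewrite -kmN -zE zc.
Qed.

Lemma third_code_nbr k u w : z = x + ev k u -> `|u| = 1 -> C w -> adj z w ->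
  w = x + ev k (2 * u).
Proof.
move=> zE u1 Cw /adjP[q [d [d1 wE]]]; rewrite {}wE zE in Cw *.
case: (q =P k) => [qk|qk]; first subst q.
  have [->|du] : d = u \/ d = - u by lia.
    by vert_eq.
  suff back : x + ev k u + ev k d = x by rewrite back in Cw; case: (distC_ge_notC x_C2.2 Cw).
  by rewrite du; vert_eq.
(* Otherwise w is adjacent to r = x + d e_q, a neighbour of x other than z; r is
   neither far from C nor one of the unit vectors s e_i, t e_j. *)
pose r := x + ev q d.
have r_not_ev a sa b sb : x = ev a sa + ev b sb -> a <> N -> `|sa| = 1 ->
    z <> ev b sb -> r <> ev a sa.
  move=> xE aN sa1 zb ra; apply: (ev2_notC aN sa1 u1 _ (third_not_mN zE)).
    by move=> ab0; apply: zb; rewrite zE xE addrAC ab0 add0r.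
  by rewrite -ra /r addrAC.
have xr : adj x r by exact: adj_shift.
case: (distC_ge2_adj (x_nbr_far xr _ _ _) _ Cw).
- exact: (r_not_ev i s j t erefl iN s1 zj).
- exact: (r_not_ev j t i s (addrC _ _) jN t1 zi).
- by rewrite zE; vert_neq q.
- by rewrite /r; adj_via k u.
Qed.

Lemma third_dir k u : z = x + ev k u -> `|u| = 1 -> (k = i /\ u = s) \/ (k = j /\ u = t).
Proof.
move=> zE u1; have [[w [Cw zw]] _] := Dz.
have wE := third_code_nbr zE u1 Cw zw.
case: (k =P i) => [ki|ki].
  subst k; left; split=> //; have [//|us] : u = s \/ u = - s by lia.
  by case: zj; rewrite zE us; vert_eq.
case: (k =P j) => [kj|kj].
  subst k; right; split=> //; have [//|ut] : u = t \/ u = - t by lia.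
  by case: zi; rewrite zE ut; vert_eq.
(* Otherwise v = s e_i + u e_k is in C_2 and has four C_1-neighbours. *)
exfalso; pose v := ev i s + ev k u.
have kmN := third_not_mN zE.
have v_far : distC_ge C v 2.
  by apply: (ev_nbr_far iN s1 (adj_shift _ _ u1)); [vert_neq k | move/addrI].
have Dv : distC C v 2.
  by split=> //; exists 0; split=> //; rewrite /v l1_ev2_0; [lia | apply/eqP => ik; case: ki].
have vw : adj (v + ev k u) w by rewrite wE /v; adj_via j t.
apply: (C2_no_four_C1_nbrs (w1 := ev i s) (w2 := ev k u) (w3 := z) (w4 := v + ev k u) Dv).
  rewrite /= !inE !negb_or zE /v.
  by repeat (apply/andP; split) => //; apply/eqP; first [vert_neq i | vert_neq j | vert_neq k].
move=> y; rewrite !inE => /or4P[] /eqP->.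
- by split; [rewrite /v; adj_via k (- u) | exact: ev_notN_C1].
- by split; [rewrite /v; adj_via i (- s) | exact: ev_C1].
- by split=> //; rewrite zE /v; adj_via j t.
- split; first exact: adj_shift.
  exact: (distC1_adj (distC_ge2_adj v_far (adj_shift _ _ u1)) Cw vw).
Qed.

Lemma x_code_dist2_uniq y y' : C y -> adj z y -> C y' -> l1 x y' = 2%N -> y' <> 0 -> y' = y.
Proof.
move=> Cy zy Cy' /l1_midpoint[r xr ry'] y'0.
have Dr : distC C r 1.
  by apply: (distC1_adj _ Cy' ry'); exact: (distC_ge2_adj x_C2.2 xr).
have r_not_ev a sa : `|sa| = 1 -> r <> ev a sa.
  move=> sa1 ra; apply: y'0; apply: (C1_code_nbr_uniq Dr Cy' C0 ry').
  by rewrite ra; adj_via a (- sa).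
case: (r =P z) => [rz|rz]; first by rewrite rz in ry'; exact: (C1_code_nbr_uniq Dz Cy' Cy).
have := x_nbr_far xr (r_not_ev i s s1) (r_not_ev j t t1) rz.
by move/distC_ge2_adj/(_ ry').
Qed.

End ThirdNeighbour.

Lemma weight2_code_nbr : exists y, [/\ C y, y = x + ev i (2 * s) \/ y = x + ev j (2 * t),
  l1 x y = 2%N & forall y', C y' -> l1 x y' = 2%N -> y' <> 0 -> y' = y].
Proof.
have [z [xz Dz zi zj]] := x_third_C1_nbr.
have [k [u [u1 zE]]] := adjP xz.
have [[w [Cw zw]] _] := Dz.
have wE := third_code_nbr xz Dz zi zj zE u1 Cw zw.
exists w; split=> //.
- by rewrite wE; have [[-> ->]|[-> ->]] := third_dir xz Dz zi zj zE u1; [left | right].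
- by rewrite wE l1_shift; lia.
- by move=> y'; exact: (x_code_dist2_uniq xz Dz zi zj).
Qed.

End Weight2.

Hypothesis N_last : val N = n.-1.

Lemma type1100_lastzero_code_nbr x : type1100 x -> lastzero x ->
  distC C x 2 /\
  exists y, (C y /\ type3100 y /\ lastzero y /\ l1 x y = 2%N) /\
    forall y', C y' /\ type3100 y' /\ lastzero y' /\ l1 x y' = 2%N -> y' = y.
Proof.
move=> /type1100_ev2[i [j [s [t [ij s1 t1 ->]]]]] /(lastzeroP _ N_last) xN.
have ij' : i <> j by apply/eqP.
have iN : i <> N by move=> iN; move: xN; rewrite -iN !(vertD, evE) eqxx (negbTE ij); lia.
have jN : j <> N by move=> jN; move: xN; rewrite -jN !(vertD, evE) eqxx eq_sym (negbTE ij); lia.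
have [y [Cy yE xy y_uniq]] := weight2_code_nbr ij' iN jN s1 t1.
split; first by apply: x_C2.
have y3100 : type3100 y.
  by case: yE => ->; last rewrite [ev i s + _]addrC; apply: tripled_type3100; rewrite // eq_sym.
have y_lastzero : lastzero y.
  by apply/(lastzeroP _ N_last); case: yE => ->; rewrite !(vertD, evE); coord_cases; lia.
exists y; split=> // y' [Cy' [[a [b [_ [y'a _]]]] [_ xy']]]; apply: y_uniq => // y'0.
by rewrite y'0 vert0 in y'a.
Qed.

End AllOnesCode.

Unset Implicit Arguments.

Theorem mainTheorem11 (n : nat) (C : code n) (rho : nat) (alpha : nat -> nat -> nat) :
  (2 <= n)%N ->
  CRC C rho alpha -> all_ones rho alpha -> (2 <= rho)%N ->
  alpha 1%N 0%N = 1%N -> alpha 2%N 1%N = 3%N ->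
  C (zerov n) -> C (minus_en n) ->
  ((forall (i : 'I_n) (eps : int), (eps = 1 \/ eps = -1) ->
      forall x y : vert n, C x -> C y -> cap i eps x -> cap i eps y ->
        slice0 x -> slice0 y -> x = y) /\
   (exists s : seq (vert n), (size s <= 2 * (n - 1))%N /\
      forall x, C x -> type3100 x -> slice0 x -> x \in s)) /\
  (forall x : vert n, type1100 x -> lastzero x ->
     distC C x 2 /\
     exists y : vert n, (C y /\ type3100 y /\ lastzero y /\ l1 x y = 2%N) /\
       forall y' : vert n, C y' /\ type3100 y' /\ lastzero y' /\ l1 x y' = 2%N -> y' = y).
Proof.
move=> n2 [_ [nb _]] ones rho2 alpha10 alpha21 C0 CmN.
have nbr i j m v : (i <= rho)%N -> (j <= rho)%N -> alpha i j = m -> distC C v i ->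
    nbcount C v j m.
  by move=> ? ? <-; exact: nb.
have a0 v : C v -> nbcount C v 0 1 by move=> /distC0; apply: nbr => //; exact: ones.
have c1 v : distC C v 1 -> nbcount C v 0 1 by apply: nbr => //; lia.
have a1 v : distC C v 1 -> nbcount C v 1 1 by apply: nbr; rewrite ?ones //; lia.
have c2 v : distC C v 2 -> nbcount C v 1 3 by apply: nbr => //; lia.
have cap_uniq := cap_code_uniq a0 c1.
split.
  split; last exact: slice0_type3100_cover cap_uniq.
  by move=> i eps _ x y Cx Cy cx cy _ _; exact: cap_uniq cx cy.
have N_lt : (n.-1 < n)%N by lia.
have CmN' : C (ev (Ordinal N_lt) (-1)).
  by rewrite (_ : ev _ _ = minus_en n) //; apply/ffunP => k; rewrite evE ffunE.
exact: (type1100_lastzero_code_nbr a0 c1 a1 c2 C0 CmN' erefl).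
Qed.
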